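(* Let $P$ be a finite subset of $\mathbb{S}^n$ without antipodal pairs and let $a\in\mathbb{R}$. If the function $x\mapsto d_{\mathbb{S}^n}(x,P)+a$ belongs to $\mathbf{E}(\mathbb{S}^n)$, then $a=\frac12\mathrm{diam}(P)$ and $P$ is pointwise extremal.
   Context: $\mathbb{S}^n$ is the unit $n$-sphere with geodesic metric $d_{\mathbb{S}^n}$; $d_{\mathbb{S}^n}(x,P)=\min_{p\in P}d_{\mathbb{S}^n}(x,p)$. For a metric space $X$, $\Delta(X)=\{f:X\to\mathbb{R}\text{ bounded}:f(x)+f(x')\ge d_X(x,x')\}$ and the tight span $\mathbf{E}(X)$ is the set of pointwise-minimal elements of $\Delta(X)$. For $p\in P$, $\mathrm{comax}_P(p)=\{p'\in P:d_{\mathbb{S}^n}(p,p')=\mathrm{diam}(P)\}$. A point $p\in P$ is held by $P$ if for every tangent vector $v\in T_p\mathbb{S}^n$ there is $p'\in\mathrm{comax}_P(p)$ with $\langle v,\exp_p^{-1}(p')\rangle\ge0$, where $\exp_p^{-1}(p')$ is the unit tangent vector at $p$ of the shortest geodesic from $p$ to $p'$. $P$ is pointwise extremal if every point of $P$ is held by $P$. *)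

From HB Require Import structures.
From mathcomp Require Import all_boot all_order all_algebra.
From mathcomp Require Import reals trigo.
Set Implicit Arguments. Unset Strict Implicit. Unset Printing Implicit Defensive.
Import Order.TTheory GRing.Theory Num.Theory.
Local Open Scope ring_scope.

Section Sphere.
Variables (R : realType) (n : nat).
Notation V := 'rV[R]_(n.+1).

Definition dot (u v : V) : R := \sum_(i < n.+1) u ord0 i * v ord0 i.

Definition on_sphere (x : V) : Prop := dot x x = 1.

Definition dS (x y : V) : R := acos (dot x y).

Definition distP (P : seq V) (x : V) : R :=
  \big[Num.min/dS x (head 0 P)]_(p <- P) dS x p.

Definition diamP (P : seq V) : R :=
  \big[Num.max/0]_(p <- P) \big[Num.max/0]_(q <- P) dS p q.

Definition in_comax (P : seq V) (p p' : V) : Prop :=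
  p' \in P /\ dS p p' = diamP P.

Definition tangent (p v : V) : Prop := dot v p = 0.

(* exp_p^{-1}(p'): unit tangent vector at p of the shortest geodesic from p
   to p' (normalized projection of p' onto the tangent space at p). *)
Definition exp_inv (p p' : V) : V :=
  let w := p' - dot p p' *: p in (Num.sqrt (dot w w))^-1 *: w.

Definition held (P : seq V) (p : V) : Prop :=
  forall v, tangent p v ->
    exists p', in_comax P p p' /\ 0 <= dot v (exp_inv p p').

Definition pointwise_extremal (P : seq V) : Prop :=
  forall p, p \in P -> held P p.

Definition no_antipodal (P : seq V) : Prop :=
  forall p, p \in P -> - p \notin P.

Definition Delta_S (f : V -> R) : Prop :=
  (exists M : R, forall x, on_sphere x -> `|f x| <= M) /\
  (forall x x', on_sphere x -> on_sphere x' -> dS x x' <= f x + f x').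

(* Tight span E(S^n): pointwise-minimal elements of Delta(S^n)
   (functions compared on S^n only). *)
Definition tight_span_S (f : V -> R) : Prop :=
  Delta_S f /\
  (forall g, Delta_S g -> (forall x, on_sphere x -> g x <= f x) ->
     forall x, on_sphere x -> g x = f x).

End Sphere.

(* A function f of the tight span cannot be lowered at any point x0: if some
   c >= 0 satisfies d(x0, y) <= c + f(y) for every y, then f(x0) <= c, since
   otherwise lowering f at x0 to c stays in Delta.  For f = d(., P) + a and M
   bounding the distances from x0 to P, the triangle inequality provides
   c = max(0, M - a).  At a point of P this forces 2a <= diam P, while
   f(p) + f(q) >= d(p, q) gives the reverse inequality.
   To see that p in P is held against a tangent vector v, walk a distance t
   from p in the direction -v, with t so small that p stays the point of P
   nearest to the endpoint x.  Non-lowerability at x yields q in P with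
   d(x, q) = t + diam P, so q is diametral to p and the geodesic from x
   through p reaches q; comparing cosines then gives <v, q> = |v| sin(diam P),
   which is nonnegative. *)

From HB Require Import structures.
From mathcomp Require Import all_boot all_order all_algebra.
From mathcomp Require Import reals trigo.
From mathcomp Require Import ring lra.
Import Order.TTheory GRing.Theory Num.Theory.
Local Open Scope ring_scope.
Set Implicit Arguments.
Unset Strict Implicit.

Section Selective.
Variables (I U : eqType) (op : U -> U -> U).
Hypothesis op_sel : forall u v, op u v \in [:: u; v].

Lemma big_selective_attained (r : seq I) (F : I -> U) i0 :
  i0 \in r -> exists2 i, i \in r & \big[op/F i0]_(j <- r) F j = F i.
Proof.
move=> i0r; suff : \big[op/F i0]_(j <- r) F j \in map F r by case/mapP=> i; exists i.
rewrite big_seq; elim/big_ind: _ => [|u v hu hv|i ir]; first exact: map_f.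
- by have := op_sel u v; rewrite !inE => /orP[] /eqP ->.
- exact: map_f.
Qed.
End Selective.

Section BigMinMax.
Variables (R : realDomainType) (I : eqType).
Implicit Types (r : seq I) (F : I -> R).

Lemma bigmin_seq_attained r F i0 :
  i0 \in r -> exists2 i, i \in r & \big[Num.min/F i0]_(j <- r) F j = F i.
Proof.
by apply: big_selective_attained => u v; rewrite !inE; case: leP; rewrite eqxx ?orbT.
Qed.

Lemma exists_argmax_seq r F :
  r != [::] -> exists2 i, i \in r & forall j, j \in r -> F j <= F i.
Proof.
case: r => [//|i0 r] _.
have [i ir max_i] : exists2 i, i \in i0 :: r &
    \big[Num.max/F i0]_(j <- i0 :: r) F j = F i.
  apply: big_selective_attained; last exact: mem_head.
  by move=> u v; rewrite !inE; case: leP; rewrite eqxx ?orbT.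
by exists i => // j jr; rewrite -max_i le_bigmax_seq.
Qed.
End BigMinMax.

Section Sphere.
Variables (R : realType) (n : nat).
Notation V := 'rV[R]_(n.+1).
Implicit Types (u v w x y z p q : V) (P : seq V).

Lemma dotC u v : dot u v = dot v u.
Proof. by apply: eq_bigr => i _; rewrite mulrC. Qed.

Lemma dotDl u v w : dot (u + v) w = dot u w + dot v w.
Proof. by rewrite /dot -big_split; apply: eq_bigr => i _; rewrite mxE mulrDl. Qed.

Lemma dotZl (k : R) u w : dot (k *: u) w = k * dot u w.
Proof. by rewrite /dot mulr_sumr; apply: eq_bigr => i _; rewrite mxE mulrA. Qed.

Lemma dotNl u w : dot (- u) w = - dot u w.
Proof. by rewrite -scaleN1r dotZl mulN1r. Qed.

Lemma dotBl u v w : dot (u - v) w = dot u w - dot v w.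
Proof. by rewrite dotDl dotNl. Qed.

Lemma dotDr u v w : dot w (u + v) = dot w u + dot w v.
Proof. by rewrite dotC dotDl !(dotC w). Qed.

Lemma dotZr (k : R) u w : dot w (k *: u) = k * dot w u.
Proof. by rewrite dotC dotZl dotC. Qed.

Lemma dotNr u w : dot w (- u) = - dot w u.
Proof. by rewrite dotC dotNl dotC. Qed.

Lemma dotBr u v w : dot w (u - v) = dot w u - dot w v.
Proof. by rewrite dotDr dotNr. Qed.

Lemma dot0l u : dot 0 u = 0.
Proof. by rewrite -(scale0r 0) dotZl mul0r. Qed.

Lemma dot_ge0 u : 0 <= dot u u.
Proof. by apply: sumr_ge0 => i _; rewrite -expr2 sqr_ge0. Qed.

Lemma dot_eq0 u : (dot u u == 0) = (u == 0).
Proof.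
apply/idP/eqP => [|->]; last by rewrite dot0l.
rewrite psumr_eq0 => [/allP u0|i _]; last by rewrite -expr2 sqr_ge0.
apply/matrixP => i j; rewrite (ord1 i) mxE.
by have := u0 j (mem_index_enum j); rewrite /= mulf_eq0 orbb => /eqP.
Qed.

Lemma dot_gt0 u : (0 < dot u u) = (u != 0).
Proof. by rewrite lt_def dot_eq0 dot_ge0 andbT. Qed.

Lemma cauchy_schwarz u w :
  `|dot u w| <= Num.sqrt (dot u u) * Num.sqrt (dot w w).
Proof.
have [->|u0] := eqVneq u 0; first by rewrite dot0l normr0 mulr_ge0 ?sqrtr_ge0.
have [->|w0] := eqVneq w 0; first by rewrite dotC dot0l normr0 mulr_ge0 ?sqrtr_ge0.
set a := Num.sqrt (dot u u); set b := Num.sqrt (dot w w).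
have a2 : a ^+ 2 = dot u u by rewrite sqr_sqrtr ?dot_ge0.
have b2 : b ^+ 2 = dot w w by rewrite sqr_sqrtr ?dot_ge0.
have ab0 : 0 < a * b by rewrite mulr_gt0 ?sqrtr_gt0 ?dot_gt0.
have := dot_ge0 (b *: u + a *: w); have := dot_ge0 (b *: u - a *: w).
rewrite !(dotDl, dotDr, dotNl, dotNr, dotZl, dotZr) (dotC w u) -a2 -b2 => h1 h2.
by rewrite ler_norml; apply/andP; split; nra.
Qed.

Lemma on_sphere_normalize v :
  v != 0 -> on_sphere ((Num.sqrt (dot v v))^-1 *: v).
Proof.
rewrite -dot_gt0 => v0; rewrite /on_sphere dotZl dotZr mulrA -expr2 exprVn.
by rewrite sqr_sqrtr ?mulVf // ?gt_eqF // ltW.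
Qed.

Lemma dot_sphere_bound x y : on_sphere x -> on_sphere y -> -1 <= dot x y <= 1.
Proof.
move=> hx hy; have := cauchy_schwarz x y.
by rewrite hx hy sqrtr1 mulr1 ler_norml.
Qed.

Lemma dot_orth_proj x y z : on_sphere y ->
  dot (x - dot x y *: y) (z - dot z y *: y) = dot x z - dot x y * dot z y.
Proof.
by move=> hy; rewrite !(dotBl, dotBr, dotZl, dotZr) hy (dotC y z); ring.
Qed.

Lemma dSC x y : dS x y = dS y x.
Proof. by rewrite /dS dotC. Qed.

Lemma dSxx x : on_sphere x -> dS x x = 0.
Proof. by rewrite /dS /on_sphere => ->; rewrite acos1. Qed.

Lemma dS_ge0 x y : on_sphere x -> on_sphere y -> 0 <= dS x y.
Proof. by move=> hx hy; apply/acos_ge0/dot_sphere_bound. Qed.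

Lemma dS_lepi x y : on_sphere x -> on_sphere y -> dS x y <= pi.
Proof. by move=> hx hy; apply/acos_lepi/dot_sphere_bound. Qed.

Lemma cos_dS x y : on_sphere x -> on_sphere y -> cos (dS x y) = dot x y.
Proof. by move=> hx hy; rewrite /dS acosK // in_itv /= dot_sphere_bound. Qed.

Lemma dS_gt0 x y : on_sphere x -> on_sphere y -> x != y -> 0 < dS x y.
Proof.
move=> hx hy; apply: contraNT; rewrite lt_def dS_ge0 // andbT negbK => /eqP d0.
have xy1 : dot x y = 1 by rewrite -cos_dS // d0 cos0.
by rewrite -subr_eq0 -dot_eq0 !(dotBl, dotBr) hx hy (dotC y x) xy1 !subrr.
Qed.

Lemma ler_cos : {in `[0, pi] &, {mono (@cos R) : s t /~ s <= t}}.
Proof. by apply: le_nmono_in => s t hs ht; rewrite ltr_cos. Qed.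

Lemma acos_le (c s : R) : -1 <= c <= 1 -> 0 <= s <= pi ->
  (acos c <= s) = (cos s <= c).
Proof.
move=> hc hs; rewrite -ler_cos ?acosK // in_itv //=.
by rewrite acos_ge0 // acos_lepi.
Qed.

Lemma dS_triangle x y z : on_sphere x -> on_sphere y -> on_sphere z ->
  dS x z <= dS x y + dS y z.
Proof.
move=> hx hy hz; have dxy0 := dS_ge0 hx hy; have dyz0 := dS_ge0 hy hz.
have [pi_le|lt_pi] := leP pi (dS x y + dS y z).
  exact: le_trans (dS_lepi hx hz) pi_le.
rewrite acos_le ?dot_sphere_bound //; last by rewrite addr_ge0 // ltW.
rewrite cosD !cos_dS // !sin_acos ?dot_sphere_bound //.
have := cauchy_schwarz (x - dot x y *: y) (z - dot z y *: y).
rewrite !dot_orth_proj // hx hz (dotC z y) -!expr2.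
by rewrite ler_norml => /andP[+ _]; lra.
Qed.

Definition geodesic p u (t : R) : V := cos t *: p + sin t *: u.

Lemma on_sphere_geodesic p u t : on_sphere p -> on_sphere u -> dot u p = 0 ->
  on_sphere (geodesic p u t).
Proof.
move=> hp hu up; have := cos2Dsin2 t.
by rewrite /on_sphere !(dotDl, dotDr, dotZl, dotZr) hp hu up (dotC p u) up; lra.
Qed.

Lemma dot_geodesic p u t q :
  dot (geodesic p u t) q = cos t * dot p q + sin t * dot u q.
Proof. by rewrite dotDl !dotZl. Qed.

Lemma dS_geodesic p u t : on_sphere p -> dot u p = 0 -> 0 <= t <= pi ->
  dS (geodesic p u t) p = t.
Proof.
by move=> hp up ht; rewrite /dS dot_geodesic hp up mulr1 mulr0 addr0 cosK.
Qed.

Lemma geodesic_extension_dot p u q t :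
  on_sphere p -> on_sphere u -> dot u p = 0 -> on_sphere q -> 0 < t < pi ->
  dS (geodesic p u t) q = t + dS p q -> dot u q = - sin (dS p q).
Proof.
move=> hp hu up hq t_range ext; have st0 := sin_gt0_pi t_range.
have := cos_dS (on_sphere_geodesic t hp hu up) hq.
rewrite ext cosD dot_geodesic -(cos_dS hp hq) => /eqP.
by rewrite -mulrN => /eqP /addrI /(mulfI (lt0r_neq0 st0)) ->.
Qed.

Lemma distP_le P x q : q \in P -> distP P x <= dS x q.
Proof. by move=> qP; apply: ge_bigmin_seq. Qed.

Lemma le_distP P x m :
  P != [::] -> (forall q, q \in P -> m <= dS x q) -> m <= distP P x.
Proof.
case: P => [//|p P] _ le_m; rewrite /distP big_seq.
by apply: le_bigmin => [|q qP]; apply: le_m; rewrite ?mem_head.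
Qed.

Lemma distP_attained P x : P != [::] -> exists2 q, q \in P & distP P x = dS x q.
Proof. by case: P => [//|p P] _; apply: bigmin_seq_attained; rewrite mem_head. Qed.

Lemma distP_self P p : {in P, forall q, on_sphere q} -> p \in P -> distP P p = 0.
Proof.
move=> P_sph pP; apply: le_anti; rewrite -{1}(dSxx (P_sph p pP)) distP_le //=.
by apply: le_distP => [|q qP]; [case: (P) pP|apply: dS_ge0; apply: P_sph].
Qed.

Lemma diamP_ge P p q : p \in P -> q \in P -> dS p q <= diamP P.
Proof.
by move=> pP qP; apply: (bigmax_sup_seq _ p _ _ _ pP) => //; apply: le_bigmax_seq.
Qed.

Lemma diamP_ge0 P : 0 <= diamP P.
Proof. exact: bigmax_ge_id. Qed.

Lemma diamP_le P m :
  0 <= m -> (forall p q, p \in P -> q \in P -> dS p q <= m) -> diamP P <= m.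
Proof.
move=> m0 le_m; rewrite /diamP big_seq; apply: bigmax_le => // p pP.
by rewrite big_seq; apply: bigmax_le => // q qP; apply: le_m.
Qed.

Lemma exists_separation P p : {in P, forall q, on_sphere q} -> on_sphere p ->
  exists2 t, 0 < t <= 1 & forall q, q \in P -> q != p -> 2 * t <= dS p q.
Proof.
move=> P_sph hp; set d := \big[Num.min/1]_(q <- P | q != p) dS p q.
have d0 : 0 < d.
  rewrite /d big_seq_cond; apply: lt_bigmin => // q /andP[qP qp].
  by apply: dS_gt0 => //; [exact: P_sph | rewrite eq_sym].
have d1 : d <= 1 by apply: bigmin_le_id.
exists (d / 2) => [|q qP qp]; first by apply/andP; split; lra.
by rewrite mulrC divfK ?pnatr_eq0 //; apply: ge_bigmin_seq.
Qed.

Lemma Delta_S_ge0 f x : Delta_S f -> on_sphere x -> 0 <= f x.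
Proof. by move=> [_ Df] hx; have := Df x x hx hx; rewrite dSxx //; lra. Qed.

Lemma tight_span_le f x0 c : tight_span_S f -> on_sphere x0 -> 0 <= c ->
  (forall y, on_sphere y -> dS x0 y <= c + f y) -> f x0 <= c.
Proof.
move=> [Delta_f min_f] hx0 c0 le_c; have [[B bound_f] Df] := Delta_f.
set c' := Num.min (f x0) c.
have c'0 : 0 <= c' by rewrite le_min c0 Delta_S_ge0.
have le_c' y : on_sphere y -> dS x0 y <= c' + f y.
  by move=> hy; rewrite /c'; case: (leP (f x0) c) => _; [apply: Df | apply: le_c].
pose g x := if x == x0 then c' else f x.
have Dg : Delta_S g.
  split=> [|x y hx hy].
    exists B => x hx; rewrite /g; case: eqP => _; last exact: bound_f.
    apply: le_trans (bound_f x0 hx0); rewrite !ger0_norm ?Delta_S_ge0 //.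
    by rewrite ge_min lexx.
  rewrite /g; case: eqP => [->|_]; case: eqP => [->|_]; rewrite ?le_c' //.
  - by rewrite dSxx //; lra.
  - by rewrite dSC addrC le_c'.
  - exact: Df.
have g_le x : on_sphere x -> g x <= f x.
  by move=> hx; rewrite /g; case: eqP => [->|//]; rewrite ge_min lexx.
have := min_f g Dg g_le x0 hx0; rewrite /g eqxx => <-.
by rewrite ge_min lexx orbT.
Qed.

Lemma held_of_comax_dot_ge0 P p :
  (forall v, tangent p v -> exists2 q, in_comax P p q & 0 <= dot v q) -> held P p.
Proof.
move=> comax_v v vp; have [q comax_q vq] := comax_v v vp; exists q; split=> //.
rewrite /exp_inv dotZr mulr_ge0 ?invr_ge0 ?sqrtr_ge0 //.
by rewrite dotBr dotZr vp mulr0 subr0.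
Qed.

Section ShiftedDistance.
Variables (P : seq V) (a : R).
Hypotheses (P_neq0 : P != [::]) (P_sph : {in P, forall q, on_sphere q}).
Hypothesis P_tight : tight_span_S (fun x => distP P x + a).

Let P_inhabited : exists p0, p0 \in P.
Proof. by case: P P_neq0 => // p0 P' _; exists p0; rewrite mem_head. Qed.

Lemma distP_shift_le x M : on_sphere x -> (forall q, q \in P -> dS x q <= M) ->
  distP P x + a <= Num.max 0 (M - a).
Proof.
move=> hx le_M; apply: (tight_span_le P_tight hx); first by rewrite le_max lexx.
move=> y hy; have [q qP ->] := distP_attained y P_neq0.
have := dS_triangle hx (P_sph qP) hy; have := le_M q qP.
have : M - a <= Num.max 0 (M - a) by rewrite le_max lexx orbT.
by rewrite (dSC q y); lra.
Qed.

Lemma shift_ge0 : 0 <= a.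
Proof.
have [[p0 p0P] [Delta_f _]] := (P_inhabited, P_tight).
by have := Delta_S_ge0 Delta_f (P_sph p0P); rewrite distP_self ?add0r.
Qed.

Lemma shift_eq_half_diam : a = diamP P / 2.
Proof.
have [[p0 p0P] [[_ Df] _]] := (P_inhabited, P_tight).
have diam_le : diamP P <= a + a.
  apply: diamP_le => [|p q pP qP]; first by have := shift_ge0; lra.
  by have := Df p q (P_sph pP) (P_sph qP); rewrite !distP_self // !add0r.
have [a_ge0 diam_ge0] := (shift_ge0, diamP_ge0 P).
have := distP_shift_le (P_sph p0P) (fun q qP => diamP_ge p0P qP).
by rewrite distP_self // add0r le_max => /orP[] ?; lra.
Qed.

Lemma exists_comax p : p \in P -> exists q, in_comax P p q.
Proof.
move=> pP; have [q qP far_q] := exists_argmax_seq (dS p) P_neq0.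
have [hp hq] := (P_sph pP, P_sph qP).
have /orP a_le : (a <= 0) || (a <= dS p q - a).
  by have := distP_shift_le hp far_q; rewrite distP_self // add0r le_max.
exists q; split=> //; have := diamP_ge pP qP; have := dS_ge0 hp hq.
by have := shift_eq_half_diam; have := shift_ge0; case: a_le; lra.
Qed.

Lemma comax_of_nearest p x : p \in P -> on_sphere x -> 0 < dS x p ->
    (forall q, q \in P -> dS x p <= dS x q) ->
  exists2 q, in_comax P p q & dS x q = dS x p + diamP P.
Proof.
move=> pP hx dxp0 nearest_p; have [q qP far_q] := exists_argmax_seq (dS x) P_neq0.
have := distP_shift_le hx far_q; rewrite le_max.
have := le_distP P_neq0 nearest_p; have := shift_eq_half_diam; have := shift_ge0.
have := dS_triangle hx (P_sph pP) (P_sph qP); have := diamP_ge pP qP.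
move=> dpq_le tri a_ge0 a_eq dxp_le /orP[] far_le; first lra.
by exists q; first split=> //; lra.
Qed.

Lemma comax_dot_ge0 p v : p \in P -> tangent p v -> v != 0 ->
  exists2 q, in_comax P p q & 0 <= dot v q.
Proof.
move=> pP vp v0; have hp := P_sph pP.
set u : V := (Num.sqrt (dot (- v) (- v)))^-1 *: - v.
have hu : on_sphere u by apply: on_sphere_normalize; rewrite oppr_eq0.
have up : dot u p = 0 by rewrite /u dotZl (dotNl v p) vp oppr0 mulr0.
have [t /andP[t0 t1] sep] := exists_separation P_sph hp.
have two_le_pi := @pi_ge2 R.
set x := geodesic p u t.
have hx : on_sphere x := on_sphere_geodesic t hp hu up.
have dxp : dS x p = t by apply: dS_geodesic => //; apply/andP; split; lra.
have nearest_p q : q \in P -> dS x p <= dS x q.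
  move=> qP; have [->|qp] := eqVneq q p; first exact: lexx.
  have := sep q qP qp; have := dS_triangle hp hx (P_sph qP).
  by rewrite (dSC p x) dxp; lra.
have dxp_gt0 : 0 < dS x p by rewrite dxp.
have [q [qP dpq]] := comax_of_nearest pP hx dxp_gt0 nearest_p; rewrite dxp => dxq.
have hq := P_sph qP.
have uq : dot u q = - sin (dS p q).
  apply: (geodesic_extension_dot (t := t)) => //; last by rewrite -/x dxq dpq.
  by apply/andP; split; lra.
have sin_ge0 : 0 <= sin (dS p q) by rewrite sin_ge0_pi // dS_ge0 ?dS_lepi.
exists q => //; move: uq sin_ge0; rewrite /u dotZl (dotNl v q) mulrN => /oppr_inj <-.
by rewrite pmulr_rge0 // invr_gt0 sqrtr_gt0 dot_gt0 oppr_eq0.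
Qed.

Lemma shift_pointwise_extremal : pointwise_extremal P.
Proof.
move=> p pP; apply: held_of_comax_dot_ge0 => v vp.
have [->|v0] := eqVneq v 0; last exact: comax_dot_ge0.
by have [q comax_q] := exists_comax pP; exists q; rewrite ?dot0l.
Qed.

End ShiftedDistance.

End Sphere.

Unset Implicit Arguments.

Theorem proposition4p8 (R : realType) (n : nat) (P : seq 'rV[R]_(n.+1)) (a : R) :
  P != [::] ->
  (forall p, p \in P -> on_sphere p) ->
  no_antipodal P ->
  tight_span_S (fun x => distP P x + a) ->
  a = diamP P / 2 /\ pointwise_extremal P.
Proof.
move=> P_neq0 P_sph _ P_tight; split.
- exact: shift_eq_half_diam P_neq0 P_sph P_tight.
- exact: shift_pointwise_extremal P_neq0 P_sph P_tight.
Qed.
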